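(* Let $k\geq 2$ and let $a,b$ be positive integers with $a\geq k-1$ and $b\geq a-k+3$. Then the rooted $k$-hypergraph $\mathcal{T}=\mathcal{T}(a,b,k)$ (defined in the context) is balanced: for every nonempty set $S$ of non-root vertices of $\mathcal{T}$, $\frac{\epsilon(S)}{|S|}\geq \frac{b}{a}$, where $\epsilon(S)$ is the number of edges of $\mathcal{T}$ containing at least one vertex of $S$ (note $b/a=\epsilon(U-R)/|U-R|$ where $U-R$ is the set of all non-roots).
   Context: The rooted $k$-hypergraph $\mathcal{T}(a,b,k)$: its non-root vertices are $v_1,\dots,v_a$ (in this order); for $1\leq j\leq a-k+1$, $\{v_j,\dots,v_{j+k-1}\}$ is an edge. For $1\leq j\leq a-k+2$, call $\{v_j,\dots,v_{j+k-2}\}$ the $j$-th $(k-1)$-set. Its roots are $\rho_1,\dots,\rho_{b-a+k-1}$ (set $R$), and for each $i$ there is an edge consisting of $\rho_i$ together with the $m_i$-th $(k-1)$-set, where $m_i=\left\lfloor 1+\frac{(i-1)(a-k+2)}{b-a+k-2}\right\rfloor$ for $1\leq i\leq b-a+k-2$ and $m_{b-a+k-1}=a-k+2$. These are all the edges, so $\mathcal{T}$ has exactly $b$ edges. A rooted $k$-hypergraph with vertex set $U$ and root set $R$ is balanced if every nonempty $S\subseteq U-R$ satisfies $\epsilon(S)/|S|\geq \epsilon(U-R)/|U-R|$. *)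

From mathcomp Require Import all_boot all_order all_algebra.
Set Implicit Arguments. Unset Strict Implicit. Unset Printing Implicit Defensive.
Import Order.TTheory GRing.Theory Num.Theory.

(* A rooted hypergraph on a finite vertex type V is given by its root set R
   and its list of edges E (a list, so edges are counted with multiplicity).
   The non-roots are ~: R. *)

Definition eps (V : finType) (E : seq {set V}) (S : {set V}) : nat :=
  count (fun e : {set V} => ~~ [disjoint e & S]) E.

Definition balanced (V : finType) (R : {set V}) (E : seq {set V}) : Prop :=
  forall S : {set V}, S \subset ~: R -> S != set0 ->
    ((eps E (~: R))%:R / #|~: R|%:R <= (eps E S)%:R / #|S|%:R :> rat)%R.

(* Non-root v_{x+1} is [inl x] for x : 'I_a (0-indexed);
   root rho_{i+1} is [inr i] for i : 'I_(nroots a b k). *)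

Definition nroots (a b k : nat) : nat := (b + k) - (a + 1).

Definition Tvert (a b k : nat) : finType := ('I_a + 'I_(nroots a b k))%type.

(* m_i for 1 <= i <= b-a+k-1 (1-indexed i). *)
Definition mT (a b k i : nat) : nat :=
  if i <= (b + k) - (a + 2) then
    1 + ((i - 1) * ((a + 2) - k)) %/ ((b + k) - (a + 2))
  else (a + 2) - k.

(* the j-th (k-1)-set {v_j, ..., v_{j+k-2}} (1-indexed j) *)
Definition kset (a b k j : nat) : {set Tvert a b k} :=
  [set v : Tvert a b k |
     if v is inl x then (j - 1 <= x) && (x < j - 1 + (k - 1)) else false].

(* path edge {v_j, ..., v_{j+k-1}} (1-indexed j, 1 <= j <= a-k+1) *)
Definition pedge (a b k j : nat) : {set Tvert a b k} :=
  [set v : Tvert a b k |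
     if v is inl x then (j - 1 <= x) && (x < j - 1 + k) else false].

(* root edge {rho_i} u (m_i-th (k-1)-set), with i 1-indexed *)
Definition redge (a b k : nat) (i : 'I_(nroots a b k)) : {set Tvert a b k} :=
  (inr i : Tvert a b k) |: kset a b k (mT a b k i.+1).

Definition Troots (a b k : nat) : {set Tvert a b k} :=
  [set v : Tvert a b k | if v is inr _ then true else false].

Definition Tedges (a b k : nat) : seq {set Tvert a b k} :=
  [seq pedge a b k j | j <- iota 1 ((a + 1) - k)] ++
  [seq redge i | i <- enum 'I_(nroots a b k)].

From mathcomp Require Import all_boot all_order all_algebra.
Import Order.TTheory GRing.Theory Num.Theory.
From mathcomp Require Import zify.

(* Lay the non-roots v_1, ..., v_a side by side as unit cells of the segment
   [0, a), and cut the same segment into b cells of length a/b, one per edge.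
   If the edges are put in the right order (path edges and root edges merged
   according to where their vertex sets start), the cell of every edge lies
   within the span of its vertex set.  The unit cell of a vertex of S is then
   covered by cells of edges meeting S, whence |S| <= (a/b) eps(S).  In
   integers: the pairs (x, s) with x in S and s < b correspond injectively,
   through x * b + s = sigma * a + r, to pairs (edge in slot sigma, r < a),
   and that edge meets S. *)

Lemma count_nth_card {T : Type} (x0 : T) {p : pred T} {s : seq T} {n : nat} :
  size s = n -> count p s = #|[set q : 'I_n | p (nth x0 s q)]|.
Proof. by move=> <-; rewrite -sum1_count (big_nth x0) big_mkord sum1dep_card. Qed.

Lemma card_preimset_sub_imset {aT rT : finType} {f : aT -> rT} {S : {set rT}} :
  injective f -> S \subset f @: [set: aT] -> #|f @^-1: S| = #|S|.
Proof.
move=> f_inj /subsetP Sf; rewrite -(card_imset _ f_inj).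
apply: eq_card => y; apply/imsetP/idP => [[x] | yS]; first by rewrite inE => ? ->.
by have /imsetP[x _ y_fx] := Sf y yS; exists x; rewrite // inE -y_fx.
Qed.

Lemma ler_nat_ratio (R : numFieldType) (m n p q : nat) : 0 < n -> 0 < q ->
  m * q <= p * n -> (m%:R / n%:R <= p%:R / q%:R :> R)%R.
Proof.
move=> n_gt0 q_gt0 le_mqpn.
by rewrite ler_pdivrMr ?ltr0n // mulrAC ler_pdivlMr ?ltr0n // -!natrM ler_nat.
Qed.

Lemma cell_overlap_interval (a n s l h x u : nat) :
  l * n <= s * a -> s.+1 * a <= h * n ->
  x * n <= u < x.+1 * n -> s * a <= u < s.+1 * a -> l <= x < h.
Proof.
move=> lo_s s_hi /andP[xu ux] /andP[su us].
have /andP[_ lx] : (0 < n) && (l < x.+1) by rewrite -ltn_mul2r; lia.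
have /andP[_ xh] : (0 < n) && (x < h) by rewrite -ltn_mul2r; lia.
by rewrite -ltnS lx xh.
Qed.

Section SlotCount.

Context {a n : nat} {F : 'I_n -> {set 'I_a}} {slot : 'I_n -> 'I_n}.
Hypothesis slot_inj : injective slot.
Hypothesis slot_cover : forall q (x : 'I_a) u,
  x * n <= u < x.+1 * n -> slot q * a <= u < (slot q).+1 * a -> x \in F q.

Lemma slot_count (S : {set 'I_a}) :
  n * #|S| <= a * #|[set q | ~~ [disjoint F q & S]]|.
Proof.
pose pos (p : 'I_a * 'I_n) := p.1 * n + p.2.
have pos_div_lt p : pos p %/ a < n.
  by move: (ltn_ord p.1) (ltn_ord p.2) => ? ?; rewrite ltn_divLR /pos; nia.
have pos_mod_lt p : pos p %% a < a by apply: ltn_pmod; move: (ltn_ord p.1); lia.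
pose g p := (invF slot_inj (Ordinal (pos_div_lt p)), Ordinal (pos_mod_lt p)).
have slot_g p : slot (g p).1 = pos p %/ a :> nat by rewrite /= f_invF.
have g_inj : injective g.
  move=> [x1 s1] [x2 s2] [/(congr1 slot)] /(congr1 val).
  rewrite !f_invF /= => e_div e_mod.
  have e_pos : x1 * n + s1 = x2 * n + s2.
    by rewrite (divn_eq (x1 * n + s1) a) (divn_eq (x2 * n + s2) a) e_div e_mod.
  have e_x : x1 = x2 :> nat by move: (ltn_ord s1) (ltn_ord s2); nia.
  by congr pair; apply: val_inj => //=; lia.
set Q := [set q | _].
have gSQ : g @: setX S [set: 'I_n] \subset setX Q [set: 'I_a].
  apply/subsetP => _ /imsetP[[x s] + ->]; rewrite !inE !andbT /= => xS.
  have xF : x \in F (g (x, s)).1.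
    apply: (slot_cover _ _ (pos (x, s))).
      by move: (ltn_ord s); rewrite /pos /=; lia.
    by rewrite slot_g leq_divM ltn_ceil //; move: (ltn_ord x); lia.
  by apply/negP => /disjointFr/(_ xF); rewrite xS.
move/subset_leq_card: gSQ; rewrite (card_imset _ g_inj) !cardsX !cardsT !card_ord.
by rewrite mulnC [a * _]mulnC.
Qed.

End SlotCount.

(* Edges are numbered from 0: first the path edges {v_(q+1), ..., v_(q+k)}
   for q < M - 1, then the root edges q = M - 1 + i, 0 <= i <= D, where
   M = a - k + 2 counts the (k-1)-sets, D = b - a + k - 2 and K = k - 2, so
   that a = M + K and b = M + D.  Root edge i < D starts at vertex i * M / D,
   the last one (i = D) at M - 1.  Path edge q precedes root edge i iff
   (q + 1) * D <= i * M; in the slot q + c of a path edge, c counts the root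
   edges before it, and in the slot i + t of a root edge, t counts the path
   edges before it. *)
Definition slot M D q :=
  if q < M.-1 then q + (q.+1 * D + M.-1) %/ M
  else if q - M.-1 < D then (q - M.-1) + (q - M.-1) * M %/ D
  else (M + D).-1.

Definition first_vertex M D q :=
  if q < M.-1 then q
  else if q - M.-1 < D then (q - M.-1) * M %/ D
  else M.-1.

Definition end_vertex M D K q :=
  first_vertex M D q + (if q < M.-1 then K.+2 else K.+1).

Variant slot_spec M D K q : nat -> nat -> nat -> Prop :=
| PathSlot c of q.+1 < M & q.+1 * D <= c * M < q.+1 * D + M :
    slot_spec M D K q (q + c) q (q + K.+2)
| RootSlot i t of q = M.-1 + i & i < D & t * D <= i * M < t * D + D :
    slot_spec M D K q (i + t) t (t + K.+1)
| LastSlot of q = M.-1 + D :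
    slot_spec M D K q (M + D).-1 M.-1 (M.-1 + K.+1).

Section Slots.

Context {M D K : nat}.
Hypotheses (M_gt0 : 0 < M) (D_gt0 : 0 < D).

Lemma slotP q : q < M + D ->
  slot_spec M D K q (slot M D q) (first_vertex M D q) (end_vertex M D K q).
Proof.
rewrite /end_vertex /first_vertex /slot; case: ifP => [q_path | q_root] q_lt.
  apply: PathSlot; first lia.
  by move: (leq_divM (q.+1 * D + M.-1) M) (ltn_ceil (q.+1 * D + M.-1) M_gt0); lia.
case: ifP => [i_lt | q_last]; last by apply: LastSlot; lia.
apply: RootSlot => //; first lia.
by move: (leq_divM ((q - M.-1) * M) D) (ltn_ceil ((q - M.-1) * M) D_gt0); lia.
Qed.

Lemma slot_spec_lt {q s l h} : slot_spec M D K q s l h -> s < M + D.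
Proof. by case=> [c ? ? | i t ? ? ? | ]; nia. Qed.

Lemma path_root_slot_neq {q c i t} :
  q.+1 * D <= c * M < q.+1 * D + M -> t * D <= i * M < t * D + D ->
  q + c != i + t.
Proof.
move=> /andP[qc cq] /andP[ti it]; apply/eqP.
case: (leqP (q.+1 * D) (i * M)) => [qi | iq].
- have : c < i.+1 by rewrite -(ltn_pmul2r M_gt0); lia.
  have : q.+1 < t.+1 by rewrite -(ltn_pmul2r D_gt0); lia.
  lia.
- have : i < c by rewrite -(ltn_pmul2r M_gt0); lia.
  have : t < q.+1 by rewrite -(ltn_pmul2r D_gt0); lia.
  lia.
Qed.

Lemma slot_spec_inj {q1 q2 s1 s2 l1 l2 h1 h2} :
  slot_spec M D K q1 s1 l1 h1 -> slot_spec M D K q2 s2 l2 h2 -> s1 = s2 ->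
  q1 = q2.
Proof.
case=> [c1 ? c1P | i1 t1 -> ? t1P | ->] [c2 ? c2P | i2 t2 -> ? t2P | ->] e_s;
  try nia.
- by move: (path_root_slot_neq c1P t2P); rewrite e_s eqxx.
- by move: (path_root_slot_neq c2P t1P); rewrite e_s eqxx.
Qed.

Lemma slot_spec_cover {q s l h} : slot_spec M D K q s l h ->
  l * (M + D) <= s * (M + K) /\ s.+1 * (M + K) <= h * (M + D).
Proof.
case=> [c q_lt /andP[qc cq] | i t _ i_lt /andP[ti it] | _]; last by split; nia.
- have c_le : c <= D by nia.
  by split; nia.
- have t_lt : t < M by nia.
  by split; nia.
Qed.

End Slots.

Section Hypergraph.

Context {a b k : nat}.
Hypotheses (k_ge2 : 2 <= k) (a_ge : k - 1 <= a) (b_ge : a + 3 <= b + k).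

Let M := a + 2 - k.
Let D := b + k - (a + 2).
Let K := k - 2.

Lemma setC_Troots : ~: Troots a b k = inl @: [set: 'I_a].
Proof.
apply/setP => [[x | i]]; rewrite !inE; first by rewrite imset_f.
by apply/esym/imsetP => -[].
Qed.

Lemma size_Tedges : size (Tedges a b k) = b.
Proof. by rewrite size_cat !size_map size_iota -enumT size_enum_ord /nroots; lia. Qed.

Lemma mem_Tedges q (x : 'I_a) : q < b ->
  (inl x \in nth set0 (Tedges a b k) q) =
  (first_vertex M D q <= x < end_vertex M D K q).
Proof.
move=> q_lt; rewrite /Tedges; have -> : a + 1 - k = M.-1 by rewrite /M; lia.
rewrite nth_cat size_map size_iota /end_vertex /first_vertex.
case: ifP => q_path.
  rewrite (nth_map 0) ?size_iota // nth_iota // inE add1n subSS subn0.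
  by have -> : K.+2 = k by rewrite /K; lia.
have i_lt : q - M.-1 < nroots a b k by rewrite /nroots /M; lia.
rewrite (nth_map (Ordinal i_lt)) ?size_enum_ord; last by rewrite /nroots /M; lia.
have -> : nth (Ordinal i_lt) (enum 'I_(nroots a b k)) (q - M.-1) = Ordinal i_lt.
  by apply: val_inj; rewrite /= nth_enum_ord.
rewrite /redge in_setU1 /= inE /mT -/M -/D add1n subSS subn0.
have -> : k - 1 = K.+1 by rewrite /K; lia.
by case: ifP => //; rewrite subn1.
Qed.

Lemma Tedges_eps_lb (S : {set Tvert a b k}) : S \subset ~: Troots a b k ->
  b * #|S| <= a * eps (Tedges a b k) S.
Proof.
move=> S_nonroots.
have M_gt0 : 0 < M by rewrite /M; lia.
have D_gt0 : 0 < D by rewrite /D; lia.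
have b_eq : M + D = b by rewrite /M /D; lia.
have a_eq : M + K = a by rewrite /M /K; lia.
have q_lt (q : 'I_b) : q < M + D by rewrite b_eq.
have Tslot_spec (q : 'I_b) := slotP (K := K) M_gt0 D_gt0 q (q_lt q).
have slot_lt (q : 'I_b) : slot M D q < b.
  by have := slot_spec_lt M_gt0 D_gt0 (Tslot_spec q); rewrite b_eq.
pose sl q := Ordinal (slot_lt q).
have sl_inj : injective sl.
  move=> q1 q2 /(congr1 val) e_slot; apply: val_inj.
  exact: (slot_spec_inj M_gt0 D_gt0 (Tslot_spec q1) (Tslot_spec q2) e_slot).
pose F (q : 'I_b) := inl @^-1: nth set0 (Tedges a b k) q.
have sl_cover q (x : 'I_a) u :
    x * b <= u < x.+1 * b -> sl q * a <= u < (sl q).+1 * a -> x \in F q.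
  have [lo_slot slot_hi] := slot_spec_cover M_gt0 D_gt0 (Tslot_spec q).
  rewrite a_eq b_eq in lo_slot slot_hi.
  move=> xu su; rewrite inE mem_Tedges //.
  exact: cell_overlap_interval lo_slot slot_hi xu su.
have := slot_count sl_inj sl_cover (inl @^-1: S).
rewrite (card_preimset_sub_imset inl_inj) -?setC_Troots // => /leq_trans; apply.
rewrite leq_mul2l /eps (count_nth_card set0 size_Tedges); apply/orP; right.
apply/subset_leq_card/subsetP => q; rewrite !inE -!setI_eq0 -preimsetI.
by apply: contra => /eqP->; rewrite preimset0.
Qed.

End Hypergraph.

Theorem lemma3 (k a b : nat) :
  2 <= k -> 0 < a -> 0 < b -> k - 1 <= a -> a + 3 <= b + k ->
  balanced (Troots a b k) (Tedges a b k) /\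
  (forall S : {set Tvert a b k}, S \subset ~: Troots a b k -> S != set0 ->
     (b%:R / a%:R <= (eps (Tedges a b k) S)%:R / #|S|%:R :> rat)%R).
Proof.
move=> k_ge2 a_gt0 _ a_ge b_ge.
have density_lb (S : {set Tvert a b k}) : S \subset ~: Troots a b k -> S != set0 ->
    (b%:R / a%:R <= (eps (Tedges a b k) S)%:R / #|S|%:R :> rat)%R.
  move=> S_nonroots S_n0; apply: ler_nat_ratio => //; first by rewrite card_gt0.
  by rewrite [_ * a]mulnC; apply: Tedges_eps_lb.
have card_nonroots : #|~: Troots a b k| = a.
  by rewrite setC_Troots card_imset ?cardsT ?card_ord //; apply: inl_inj.
have eps_nonroots : eps (Tedges a b k) (~: Troots a b k) = b.
  apply/eqP; rewrite eqn_leq; apply/andP; split.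
    by rewrite -[X in _ <= X](size_Tedges k_ge2 a_ge b_ge) count_size.
  rewrite -(leq_pmul2l a_gt0) -{1}card_nonroots mulnC.
  exact: Tedges_eps_lb.
split=> // S S_nonroots S_n0.
by rewrite eps_nonroots card_nonroots; apply: density_lb.
Qed.
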